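(* Let $M$ be a multiagent model, let $h\cdot s$ be a history of $M$ (so $\mathit{last}(h)\,T\,s$), let $\vec r$ be a record tuple that stops at $h$, let $a\in\mathit{Ag}$, $o\in\mathit{Obs}$ and $k\in\mathbb N$. Then $$\mathit{KT}^k(h\cdot s,\vec r)=U_T^k\big(\mathit{KT}^k(h,\vec r),\,s,\,\vec o(h,\vec r)\big)\quad\text{and}\quad \mathit{KT}^k\big(h,\vec r\cdot(o,|h|-1)_a\big)=U_\Delta^k\big(\mathit{KT}^k(h,\vec r),\,o,\,a\big).$$
   Context: Fix a countably infinite set $\mathit{AP}$ of atomic propositions, a finite nonempty set $\mathit{Obs}$ of observations, and a finite set of agents $\mathit{Ag}=\{a_1,\dots,a_m\}$. For a word $w$ we write $w_i$ for its letter at position $i$ (positions start at $0$), $|w|$ for its length (finite words) and $\mathit{last}(w)$ for its last letter. A multiagent model is $M=(\mathit{AP}_f,S,T,V,\{\sim_o\}_{o\in\mathit{Obs}},s_\iota,\vec o_\iota)$ where $\mathit{AP}_f\subseteq\mathit{AP}$ is finite, $S$ is a finite set of states, $T\subseteq S\times S$ is left-total, $V:S\to2^{\mathit{AP}_f}$, each $\sim_o$ is an equivalence relation on $S$, $s_\iota\in S$, and $\vec o_\iota=(\vec o_{\iota,a})_{a\in\mathit{Ag}}\in\mathit{Obs}^{\mathit{Ag}}$ gives each agent an initial observation. Paths are infinite sequences of states $s_0s_1\dots$ with $s_iTs_{i+1}$ (starting anywhere); histories are finite nonempty prefixes of paths. For a tuple $\vec o$, $\vec o_a$ is its $a$-component,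 $\vec o_i=\vec o_{a_i}$. An observation record is a finite word over $\mathit{Obs}\times\mathbb N$; $r_{=n}$ is the subword of $r$ consisting of the pairs with second component $n$; $r$ stops at $n$ if $r_{=m}$ is empty for all $m>n$. A record tuple is $\vec r=(\vec r_a)_{a\in\mathit{Ag}}$ of observation records; $\vec r\cdot(o,n)_a$ is $\vec r$ with $\vec r_a$ replaced by $\vec r_a\cdot(o,n)$; $\vec r$ stops at a history $h$ if each $\vec r_a$ stops at $|h|-1$. For agent $a$: $\mathit{ol}_a(\vec r,0)=\vec o_{\iota,a}\cdot o_1\cdots o_k$ if $(\vec r_a)_{=0}=(o_1,0)\cdots(o_k,0)$, and $\mathit{ol}_a(\vec r,n+1)=\mathit{last}(\mathit{ol}_a(\vec r,n))\cdot o_1\cdots o_k$ if $(\vec r_a)_{=n+1}=(o_1,n+1)\cdots(o_k,n+1)$. Histories $h,h'$ are equivalent for $a$, $h\approx^{\vec r}_a h'$, if $|h|=|h'|$ and for all $i<|h|$ and all $o$ occurring in $\mathit{ol}_a(\vec r,i)$, $h_i\sim_o h'_i$. $\vec o(h,\vec r)$ is the tuple whose $a$-component is the last element of $\mathit{ol}_a(\vec r,|h|-1)$. $k$-trees: a $0$-tree is $\langle s,\emptyset,\dots,\emptyset\rangle$ with $s\in S$; a $(k+1)$-tree is $\langle s,F_1,\dots,F_m\rangle$ with $s\in S$ and each $F_i$ a set of $k$-trees. The root of $\tau=\langle s,F_1,\dots,F_m\rangle$ is $\mathit{root}(\tau)=s$, and $\tau(a_i)=F_i$. For a history $h$ and record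 tuple $\vec r$: $\mathit{KT}^0(h,\vec r)=\langle\mathit{last}(h),\emptyset,\dots,\emptyset\rangle$ and $\mathit{KT}^{k+1}(h,\vec r)=\langle\mathit{last}(h),F_1,\dots,F_m\rangle$ with $F_i=\{\mathit{KT}^k(h',\vec r)\mid h'\text{ a history with }h'\approx^{\vec r}_{a_i}h\}$. Updates: $U_T^0(\langle s,\emptyset,\dots,\emptyset\rangle,s',\vec o)=\langle s',\emptyset,\dots,\emptyset\rangle$; $U_T^{k+1}(\langle s,F_1,\dots,F_m\rangle,s',\vec o)=\langle s',F'_1,\dots,F'_m\rangle$ where $F'_i=\{U_T^k(\tau,s'',\vec o)\mid\tau\in F_i,\ s''\sim_{\vec o_i}s',\ \mathit{root}(\tau)\,T\,s''\}$. $U_\Delta^0(\langle s,\emptyset,\dots,\emptyset\rangle,o,a_i)=\langle s,\emptyset,\dots,\emptyset\rangle$; $U_\Delta^{k+1}(\langle s,F_1,\dots,F_m\rangle,o,a_i)=\langle s,F'_1,\dots,F'_m\rangle$ where $F'_j=\{U_\Delta^k(\tau,o,a_i)\mid\tau\in F_j\}$ for $j\ne i$ and $F'_i=\{U_\Delta^k(\tau,o,a_i)\mid\tau\in F_i,\ \mathit{root}(\tau)\sim_o s\}$. *)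

From mathcomp Require Import all_boot.
Unset Printing Implicit Defensive.

(* Atomic propositions AP are modelled by nat (countably infinite).
   Agents form a finite type Ag, observations a finite nonempty type Obs. *)
Record model (Ag Obs : finType) := Model {
  AP_f : seq nat;
  St : finType;
  T : rel St;
  V : St -> pred nat;
  sim : Obs -> rel St;
  s_iota : St;
  o_iota : Ag -> Obs;
  Obs_nonempty : 0 < #|Obs|;
  T_left_total : forall s, exists s', T s s';
  V_sub : forall s p, V s p -> p \in AP_f;
  sim_equiv : forall o, equivalence_rel (sim o)
}.
Arguments AP_f {Ag Obs} m.
Arguments St {Ag Obs} m.
Arguments T {Ag Obs} m _ _.
Arguments V {Ag Obs} m _ _.
Arguments sim {Ag Obs} m _ _ _.
Arguments s_iota {Ag Obs} m.
Arguments o_iota {Ag Obs} m _.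

Section Defs.
Variables (Ag Obs : finType) (M : model Ag Obs).
Local Notation S := (St M).

Definition is_history (h : seq S) : bool :=
  if h is x :: t then path (T M) x t else false.

Definition hlast (h : seq S) : S := last (s_iota M) h.

Definition hnth (h : seq S) (i : nat) : S := nth (s_iota M) h i.

Definition orecord := seq (Obs * nat).
Definition rtuple := Ag -> orecord.

Definition rec_at (r : orecord) (n : nat) : orecord :=
  [seq p <- r | p.2 == n].

Definition rec_stops (r : orecord) (n : nat) : Prop :=
  forall m, n < m -> rec_at r m = [::].

Definition add_rec (rt : rtuple) (o : Obs) (n : nat) (a : Ag) : rtuple :=
  fun b => if b == a then rcons (rt b) (o, n) else rt b.

Definition stops_at (rt : rtuple) (h : seq S) : Prop :=
  forall a, rec_stops (rt a) (size h - 1).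

Fixpoint ol (rt : rtuple) (a : Ag) (n : nat) : seq Obs :=
  match n with
  | 0 => o_iota M a :: map fst (rec_at (rt a) 0)
  | n'.+1 => last (o_iota M a) (ol rt a n') :: map fst (rec_at (rt a) n'.+1)
  end.

Definition hequiv (rt : rtuple) (a : Ag) (h h' : seq S) : Prop :=
  size h = size h' /\
  forall i, i < size h -> forall o, o \in ol rt a i -> sim M o (hnth h i) (hnth h' i).

Definition obs_tuple (h : seq S) (rt : rtuple) : Ag -> Obs :=
  fun a => last (o_iota M a) (ol rt a (size h - 1)).

(* k-trees: a 0-tree <s, {}, ..., {}> is represented by its root s;
   a (k+1)-tree is a root together with, for each agent, a set
   (predicate) of k-trees. *)
Fixpoint ktree (k : nat) : Type :=
  match k with
  | 0 => S
  | k'.+1 => (S * (Ag -> ktree k' -> Prop))%type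
  end.

Definition root (k : nat) : ktree k -> S :=
  match k return ktree k -> S with
  | 0 => fun t => t
  | k'.+1 => fun t => t.1
  end.

Fixpoint KT (k : nat) (h : seq S) (rt : rtuple) : ktree k :=
  match k return ktree k with
  | 0 => hlast h
  | k'.+1 => (hlast h, fun a t =>
               exists h', is_history h' /\ hequiv rt a h' h /\ t = KT k' h' rt)
  end.

Fixpoint UT (k : nat) : ktree k -> S -> (Ag -> Obs) -> ktree k :=
  match k return ktree k -> S -> (Ag -> Obs) -> ktree k with
  | 0 => fun _ s' _ => s'
  | k'.+1 => fun tau s' ov =>
      (s', fun a t => exists tau0 s'',
             tau.2 a tau0 /\ sim M (ov a) s'' s' /\ T M (root k' tau0) s'' /\
             t = UT k' tau0 s'' ov)
  end.

Fixpoint UD (k : nat) : ktree k -> Obs -> Ag -> ktree k :=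
  match k return ktree k -> Obs -> Ag -> ktree k with
  | 0 => fun tau _ _ => tau
  | k'.+1 => fun tau o ai =>
      (tau.1, fun b t => exists tau0,
             tau.2 b tau0 /\ (b = ai -> sim M o (root k' tau0) tau.1) /\
             t = UD k' tau0 o ai)
  end.

End Defs.
Arguments is_history {Ag Obs} M h.
Arguments hlast {Ag Obs} M h.
Arguments hnth {Ag Obs} M h i.
Arguments rec_at {Obs} r n.
Arguments rec_stops {Obs} r n.
Arguments add_rec {Ag Obs} rt o n a _.
Arguments stops_at {Ag Obs} M rt h.
Arguments ol {Ag Obs} M rt a n.
Arguments hequiv {Ag Obs} M rt a h h'.
Arguments obs_tuple {Ag Obs} M h rt _.
Arguments ktree {Ag Obs} M k.
Arguments root {Ag Obs} M k _.
Arguments KT {Ag Obs} M k h rt.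
Arguments UT {Ag Obs} M k _ _ _.
Arguments UD {Ag Obs} M k _ _ _.

(* Extending h by s and h' by s', the
   histories rcons h' s' equivalent to rcons h s for an agent are exactly those
   with h' equivalent to h and s' ~ s for the observations the agent has at
   time |h|; as r stops at h, these are just the agent's current observation
   o(h, r), which is the condition in U_T. Appending (o, |h|-1) to an agent's
   record only adds o to the observations it has at the last position, so it
   strengthens that agent's equivalence by the condition last(h') ~_o last(h)
   imposed by U_Delta and leaves the other agents untouched. *)

From Stdlib Require Import FunctionalExtensionality PropExtensionality.
From Pilot Require Import Defs.
From mathcomp Require Import all_boot.

Section KnowledgeTreeUpdates.
Variables (Ag Obs : finType) (M : model Ag Obs).
Local Notation S := (St M).

Lemma ktree_succ_ext k (x : S) (P Q : Ag -> ktree M k -> Prop) :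
  (forall b t, P b t <-> Q b t) -> (x, P) = (x, Q) :> ktree M k.+1.
Proof.
move=> PQ; congr pair.
by do 2 apply: functional_extensionality => ?; apply: propositional_extensionality.
Qed.

Lemma root_KT k h rt : Defs.root M k (KT M k h rt) = hlast M h.
Proof. by case: k. Qed.

Lemma is_history_rcons h s : 0 < size h ->
  is_history M (rcons h s) = is_history M h && T M (hlast M h) s.
Proof. by case: h => [|x t] // _; rewrite /is_history rcons_cons rcons_path. Qed.

Lemma hnth_rcons h s i : i < size h -> hnth M (rcons h s) i = hnth M h i.
Proof. by move=> lt_i_h; rewrite /hnth nth_rcons lt_i_h. Qed.

Lemma hnth_rcons_size h s : hnth M (rcons h s) (size h) = s.
Proof. by rewrite /hnth nth_rcons ltnn eqxx. Qed.

Lemma hlast_hnth {h n} : size h = n.+1 -> hlast M h = hnth M h n.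
Proof. by move=> sz_h; rewrite /hlast /hnth -(nth_last (s_iota M)) sz_h. Qed.

Lemma ol_stopped (rt : rtuple Ag Obs) b n : rec_at (rt b) n.+1 = [::] ->
  ol M rt b n.+1 = [:: last (o_iota M b) (ol M rt b n)].
Proof. by move=> /= ->. Qed.

Lemma hequiv_rcons {rt : rtuple Ag Obs} {b n h h' s s'} :
  rec_at (rt b) n.+1 = [::] -> size h = n.+1 -> size h' = n.+1 ->
  hequiv M rt b (rcons h' s') (rcons h s) <->
  hequiv M rt b h' h /\ sim M (last (o_iota M b) (ol M rt b n)) s' s.
Proof.
move=> stop_b sz_h sz_h'.
have [last_h last_h'] : hnth M (rcons h s) n.+1 = s /\ hnth M (rcons h' s') n.+1 = s'.
  by rewrite -{1}sz_h -sz_h' !hnth_rcons_size.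
rewrite /hequiv !size_rcons sz_h sz_h'; split.
- case=> _ equiv_ext; split; last first.
    by move: (equiv_ext n.+1 (leqnn _)); rewrite last_h last_h' ol_stopped //; apply; rewrite inE.
  split=> // i lt_i_n o o_i.
  by move: (equiv_ext i (ltnW lt_i_n) o o_i); rewrite !hnth_rcons ?sz_h ?sz_h'.
- case=> [[_ equiv_h] sim_last]; split=> // i; rewrite ltnS leq_eqVlt.
  case/orP=> [/eqP -> o|lt_i_n o o_i].
    by rewrite last_h last_h' ol_stopped // inE => /eqP ->.
  by rewrite !hnth_rcons ?sz_h ?sz_h' //; apply: equiv_h.
Qed.

Lemma KT_rcons (rt : rtuple Ag Obs) n : (forall b, rec_at (rt b) n.+1 = [::]) ->
  forall k h s, size h = n.+1 ->
  KT M k (rcons h s) rt = UT M k (KT M k h rt) s (fun b => last (o_iota M b) (ol M rt b n)).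
Proof.
move=> stop_rt; elim=> [|k IHk] h s sz_h /=; first by rewrite /hlast last_rcons.
rewrite /hlast last_rcons; apply: ktree_succ_ext => b t; split.
- case=> h'' [hist_h'' [equiv_h'' ->]].
  case/lastP: h'' hist_h'' equiv_h'' => [|h' s'] hist_h' equiv_rcons.
    by move: (proj1 equiv_rcons); rewrite size_rcons.
  have sz_h' : size h' = n.+1.
    by move: (proj1 equiv_rcons); rewrite !size_rcons sz_h => -[].
  have [equiv_h sim_s'] := (hequiv_rcons (stop_rt b) sz_h sz_h').1 equiv_rcons.
  move: hist_h'; rewrite is_history_rcons ?sz_h' // => /andP [hist_h' step].
  exists (KT M k h' rt), s'; rewrite root_KT IHk //.
  by split; first exists h'.
- case=> _ [s' [[h' [hist_h' [equiv_h ->]]] [sim_s' [step ->]]]].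
  have sz_h' : size h' = n.+1 by rewrite (proj1 equiv_h).
  rewrite root_KT in step.
  exists (rcons h' s'); rewrite is_history_rcons ?sz_h' ?hist_h' // IHk //.
  by split=> //; split=> //; apply/(hequiv_rcons (stop_rt b) sz_h sz_h').
Qed.

Lemma ol_add_rec_self (rt : rtuple Ag Obs) o n a i : i <= n ->
  ol M (add_rec rt o n a) a i =
  if i == n then rcons (ol M rt a i) o else ol M rt a i.
Proof.
have rec_a : add_rec rt o n a a = rcons (rt a) (o, n) by rewrite /add_rec eqxx.
elim: i => [|i IHi] le_i_n /=; rewrite rec_a /rec_at filter_rcons /=.
  by case: eqVneq => [->|]; rewrite ?map_rcons.
by rewrite IHi ?(ltnW le_i_n) // (ltn_eqF le_i_n); case: eqVneq => [->|]; rewrite ?map_rcons.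
Qed.

Lemma ol_add_rec_other (rt : rtuple Ag Obs) o n a b : b != a ->
  ol M (add_rec rt o n a) b =1 ol M rt b.
Proof.
by move=> neq_ba; elim=> [|i IHi] /=; rewrite /add_rec (negbTE neq_ba) ?IHi.
Qed.

Lemma hequiv_add_rec {rt : rtuple Ag Obs} {o n a b h' h} : size h = n.+1 ->
  hequiv M (add_rec rt o n a) b h' h <->
  hequiv M rt b h' h /\ (b = a -> sim M o (hlast M h') (hlast M h)).
Proof.
move=> sz_h; case: (eqVneq b a) => [->|neq_ba]; last first.
  have ol_b : ol M (add_rec rt o n a) b =1 ol M rt b by exact: ol_add_rec_other.
  split=> [[sz_h' equiv_h]|[[sz_h' equiv_h] _]].
    split=> [|/eqP]; last by rewrite (negbTE neq_ba).
    by split=> // i lt_i o'; rewrite -ol_b; apply: equiv_h.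
  by split=> // i lt_i o'; rewrite ol_b; apply: equiv_h.
split=> [[sz_h' equiv_h]|[[sz_h' equiv_h] sim_last]];
  have sz_h'' : size h' = n.+1 by rewrite sz_h'.
- split=> [|_].
    split=> // i lt_i o' o'_i; apply: equiv_h => //.
    rewrite ol_add_rec_self; last by rewrite -ltnS -sz_h''.
    by case: eqP; rewrite // mem_rcons inE o'_i orbT.
  rewrite (hlast_hnth sz_h) (hlast_hnth sz_h''); apply: equiv_h; first by rewrite sz_h''.
  by rewrite ol_add_rec_self // eqxx mem_rcons mem_head.
- split=> // i lt_i o'; have le_i_n : i <= n by rewrite -ltnS -sz_h''.
  rewrite ol_add_rec_self //; case: eqVneq => [->|_]; last exact: equiv_h.
  rewrite mem_rcons inE => /orP [/eqP ->|]; last by apply: equiv_h; rewrite sz_h''.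
  by rewrite -(hlast_hnth sz_h) -(hlast_hnth sz_h''); apply: sim_last.
Qed.

Lemma KT_add_rec (rt : rtuple Ag Obs) o n a k h : size h = n.+1 ->
  KT M k h (add_rec rt o n a) = UD M k (KT M k h rt) o a.
Proof.
elim: k h => [|k IHk] h sz_h //=; apply: ktree_succ_ext => b t; split.
- case=> h' [hist_h' [/(hequiv_add_rec sz_h) [equiv_h sim_last] ->]].
  have sz_h' : size h' = n.+1 by rewrite (proj1 equiv_h).
  by exists (KT M k h' rt); rewrite root_KT IHk //; split; first exists h'.
- case=> _ [[h' [hist_h' [equiv_h ->]]] [sim_last ->]].
  have sz_h' : size h' = n.+1 by rewrite (proj1 equiv_h).
  rewrite root_KT in sim_last; exists h'; rewrite IHk //.
  by split=> //; split=> //; apply/(hequiv_add_rec sz_h).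
Qed.

End KnowledgeTreeUpdates.

Theorem mainTheorem5 (Ag Obs : finType) (M : model Ag Obs)
  (h : seq (St M)) (s : St M) (rt : rtuple Ag Obs) (a : Ag) (o : Obs) (k : nat) :
  is_history M h -> is_history M (rcons h s) -> stops_at M rt h ->
  KT M k (rcons h s) rt = UT M k (KT M k h rt) s (obs_tuple M h rt) /\
  KT M k h (add_rec rt o (size h - 1) a) = UD M k (KT M k h rt) o a.
Proof.
case: h => [|x t] // _ _ stop_rt.
have sz_h : size (x :: t) = (size t).+1 by [].
rewrite /obs_tuple sz_h subSS subn0; split; last exact: KT_add_rec.
have stop_succ b : rec_at (rt b) (size t).+1 = [::].
  by apply: (stop_rt b); rewrite sz_h subSS subn0.
exact: KT_rcons.
Qed.
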